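(* Let $4\le q<\omega$ and let $\mathbf{A}$ be a Monk algebra obtained from $\mathbf{E}^{23}_q$ by splitting. Let $\mathbf{E}$ be any subalgebra of $\mathbf{E}^{23}_q$. Then $\mathbf{A}$ is a special extension of $\mathbf{E}$, i.e., for all diversity atoms $a,b,c$ of $\mathbf{E}$: (1) if not $a=b=c$ and $a;b\ge c$, then $x;y\ge c$ whenever $x,y$ are atoms of $\mathbf{A}$ with $x\le a$ and $y\le b$; and (2) if $a;a\ge a$, then $x;y\cdot a\ne 0$ whenever $x,y$ are atoms of $\mathbf{A}$ with $x,y\le a$.
   Context: Relation algebras are in the sense of Tarski; $1'$ identity, $0'$ its complement, $;$ relative product, $x^{\smile}$ converse, $\overline{x}$ Boolean complement; integral: $1'$ is an atom; symmetric: $x^{\smile}=x$ for all $x$; a diversity atom is an atom below $0'$. For $4\le q<\omega$, $\mathbf{E}^{23}_q$ is the finite symmetric integral relation algebra with $q$ atoms $e_0=1',e_1,\dots,e_{q-1}$ such that $a;b=0'$ for distinct diversity atoms $a,b$ and $a;a=\overline{a}$ for every diversity atom $a$. For atomic relation algebras $\mathbf{A},\mathbf{B}$, $\mathbf{A}$ is obtained from $\mathbf{B}$ by splitting if $\mathbf{B}\subseteq\mathbf{A}$, every atom $x$ of $\mathbf{A}$ is below an atom $c(x)$ of $\mathbf{B}$, and for all atoms $x,y\le0'$ of $\mathbf{A}$: $x;y=c(x);c(y)\cdot0'$ if $x\ne y^{\smile}$, and $x;y=c(x);c(y)$ if $x=y^{\smile}$. A Monk algebra is an atomic symmetric integral relation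 algebra obtained by splitting from some $\mathbf{E}^{23}_q$, $4\le q<\omega$. *)

From HB Require Import structures.
From mathcomp Require Import all_boot all_order.
Set Implicit Arguments. Unset Strict Implicit. Unset Printing Implicit Defensive.
Import Order.Theory.
Local Open Scope order_scope.

Section RA.
Variables (disp : Order.disp_t) (T : ctbDistrLatticeType disp).
Variables (comp : T -> T -> T) (conv : T -> T) (ident : T).

Definition is_RA : Prop :=
  (forall x y z, comp (comp x y) z = comp x (comp y z)) /\
  (forall x y z, comp (x `|` y) z = comp x z `|` comp y z) /\
  (forall x, comp x ident = x) /\
  (forall x, conv (conv x) = x) /\
  (forall x y, conv (x `|` y) = conv x `|` conv y) /\
  (forall x y, conv (comp x y) = comp (conv y) (conv x)) /\
  (forall x y, comp (conv x) (~` (comp x y)) <= ~` y).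

Definition diversity : T := ~` ident.

Definition atom (x : T) : Prop :=
  x != \bot /\ forall y, y <= x -> y = \bot \/ y = x.

Definition ra_atomic : Prop := forall x, x != \bot -> exists2 a, atom a & a <= x.
Definition ra_integral : Prop := atom ident.
Definition ra_symmetric : Prop := forall x, conv x = x.

Definition subalgebra (S : T -> Prop) : Prop :=
  S \bot /\ (forall x y, S x -> S y -> S (x `|` y)) /\
  (forall x, S x -> S (~` x)) /\
  (forall x y, S x -> S y -> S (comp x y)) /\
  (forall x, S x -> S (conv x)) /\ S ident.

Definition atom_in (S : T -> Prop) (x : T) : Prop :=
  [/\ S x, x != \bot & forall y, S y -> y <= x -> y = \bot \/ y = x].

Definition is_E23 (q : nat) (S : T -> Prop) : Prop :=
  subalgebra S /\
  (exists s : seq T, forall x, S x -> x \in s) /\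
  (forall x, S x -> conv x = x) /\
  atom_in S ident /\
  (exists2 s : seq T, uniq s /\ size s = q & forall x, atom_in S x <-> x \in s) /\
  (forall a b, atom_in S a -> atom_in S b -> a <= diversity -> b <= diversity ->
         (a != b -> comp a b = diversity) /\ (a = b -> comp a a = ~` a)).

(* the algebra (T, comp, conv, ident) is obtained from its subalgebra B by
   splitting; c(x) is the (unique) atom of B above the atom x *)
Definition split_from (B : T -> Prop) : Prop :=
  subalgebra B /\
  (forall x, atom x -> exists2 c, atom_in B c & x <= c) /\
  (forall x y cx cy, atom x -> atom y -> x <= diversity -> y <= diversity ->
     atom_in B cx -> atom_in B cy -> x <= cx -> y <= cy ->
     (x != conv y -> comp x y = comp cx cy `&` diversity) /\
     (x = conv y -> comp x y = comp cx cy)).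

Definition special_extension (E : T -> Prop) : Prop :=
  forall a b c, atom_in E a -> atom_in E b -> atom_in E c ->
    a <= diversity -> b <= diversity -> c <= diversity ->
    (~ (a = b /\ b = c) -> c <= comp a b ->
       forall x y, atom x -> atom y -> x <= a -> y <= b -> c <= comp x y) /\
    (a <= comp a a ->
       forall x y, atom x -> atom y -> x <= a -> y <= a -> comp x y `&` a != \bot).
End RA.

From HB Require Import structures.
From mathcomp Require Import all_boot all_order.
Import Order.Theory.
Local Open Scope order_scope.
Set Implicit Arguments. Unset Strict Implicit.

(* Every atom x <= a of A lies below an atom c(x) <= a of E^23_q, and the
   splitting rule gives x;y >= c(x);c(y) . 0'.  In E^23_q this product is all
   of 0' when c(x) != c(y), and is 0' - c(x) otherwise.  For (1), either c = a,
   and then a != b separates c(x) from c(y), or c is disjoint from a, hence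
   below 0' - c(x).  For (2), a <= a;a rules out a = c(x) (since
   c(x);c(x) = -c(x)), so a meets 0' - c(x), which lies below x;y.
   The hypothesis c <= a. *)

Section BooleanFacts.
Variables (disp : Order.disp_t) (T : ctbDistrLatticeType disp).

Lemma meet_neq0 (x y z : T) : x != \bot -> x <= y -> x <= z -> y `&` z != \bot.
Proof.
move=> x0 xy xz; apply: contraNneq x0 => yz0.
by rewrite -lex0 -yz0 lexI xy xz.
Qed.

Lemma le_complx_eq0 (x : T) : x <= ~` x -> x = \bot.
Proof. by move=> xCx; apply/eqP; rewrite -lex0 -(meetxC x) lexI lexx. Qed.

End BooleanFacts.

Section Subalgebras.
Variables (disp : Order.disp_t) (T : ctbDistrLatticeType disp).
Variables (comp : T -> T -> T) (conv : T -> T) (ident : T).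
Variable S : T -> Prop.
Hypothesis subS : subalgebra comp conv ident S.

Lemma subalgebraI x y : S x -> S y -> S (x `&` y).
Proof.
case: subS => _ [SU [SC _]] Sx Sy.
by have := SC _ (SU _ _ (SC _ Sx) (SC _ Sy)); rewrite complU !complK.
Qed.

Lemma atom_in_le e a : atom_in S e -> S a -> e `&` a != \bot -> e <= a.
Proof.
case=> Se _ e_min Sa ea0.
have [ea_bot | ea_e] := e_min _ (subalgebraI Se Sa) (leIl _ _).
  by rewrite ea_bot eqxx in ea0.
by rewrite -ea_e leIr.
Qed.

Lemma atom_in_eq a b : atom_in S a -> atom_in S b -> a `&` b != \bot -> a = b.
Proof.
move=> Sa Sb ab0; apply/le_anti/andP; split.
  by apply: atom_in_le => //; case: Sb.
by apply: atom_in_le; [| case: Sa | rewrite meetC].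
Qed.

End Subalgebras.

Section SplittingE23.
Variables (disp : Order.disp_t) (T : ctbDistrLatticeType disp).
Variables (comp : T -> T -> T) (conv : T -> T) (ident : T).
Variables (q : nat) (B E : T -> Prop).
Hypothesis E23B : is_E23 comp conv ident q B.
Hypothesis splitB : split_from comp conv ident B.
Hypothesis subE : subalgebra comp conv ident E.
Hypothesis EB : forall x, E x -> B x.

Local Notation "0'" := (diversity ident).

Lemma E23_compIdiv_neq a b : atom_in B a -> atom_in B b -> a <= 0' -> b <= 0' ->
  a != b -> comp a b `&` 0' = 0'.
Proof.
case: E23B => _ [_ [_ [_ [_ table]]]] Ba Bb a0 b0 ab.
by rewrite ((table a b Ba Bb a0 b0).1 ab) meetxx.
Qed.

Lemma E23_compIdiv_ge a b : atom_in B a -> atom_in B b -> a <= 0' -> b <= 0' ->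
  0' `&` ~` a <= comp a b `&` 0'.
Proof.
move=> Ba Bb a0 b0; have [<- | ab] := eqVneq a b.
  case: E23B => _ [_ [_ [_ [_ table]]]].
  by rewrite ((table a a Ba Ba a0 a0).2 erefl) meetC.
by rewrite E23_compIdiv_neq // leIl.
Qed.

Lemma split_comp_ge x y cx cy : atom x -> atom y -> x <= 0' -> y <= 0' ->
  atom_in B cx -> atom_in B cy -> x <= cx -> y <= cy ->
  comp cx cy `&` 0' <= comp x y.
Proof.
move=> ax ay x0 y0 Bcx Bcy xcx ycy; case: splitB => _ [_ split_rule].
have [rule_neq rule_eq] := split_rule x y cx cy ax ay x0 y0 Bcx Bcy xcx ycy.
by have [/rule_eq -> | /rule_neq ->] := eqVneq x (conv y); rewrite ?leIl.
Qed.

Lemma atom_below_E_atom x a : atom x -> atom_in E a -> x <= a ->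
  exists2 c, atom_in B c & x <= c /\ c <= a.
Proof.
move=> ax Ea xa; case: splitB => subB [above _].
have [c Bc xc] := above x ax; exists c => //; split => //.
apply: (atom_in_le subB Bc); first by apply: EB; case: Ea.
by apply: meet_neq0 xc xa; case: ax.
Qed.

Lemma comp_atoms_ge x y a b cx cy : atom x -> atom y ->
  atom_in E a -> atom_in E b -> a <= 0' -> b <= 0' ->
  atom_in B cx -> atom_in B cy -> x <= cx -> cx <= a -> y <= cy -> cy <= b ->
  (0' `&` ~` cx <= comp x y) /\ (a != b -> 0' <= comp x y).
Proof.
move=> ax ay Ea Eb a0 b0 Bcx Bcy xcx cxa ycy cyb.
have cx0 := le_trans cxa a0; have cy0 := le_trans cyb b0.
have xy_ge := split_comp_ge ax ay (le_trans xcx cx0) (le_trans ycy cy0)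
  Bcx Bcy xcx ycy.
split; first exact: le_trans (E23_compIdiv_ge Bcx Bcy cx0 cy0) xy_ge.
move=> ab; rewrite -(E23_compIdiv_neq Bcx Bcy cx0 cy0) //.
apply: contra_neq ab => cxy; apply: (atom_in_eq subE Ea Eb).
by apply: meet_neq0 cxa (_ : cx <= b); [case: Bcx | rewrite cxy].
Qed.

Lemma special_extension_offdiag a b c x y :
  atom_in E a -> atom_in E b -> atom_in E c ->
  a <= 0' -> b <= 0' -> c <= 0' -> ~ (a = b /\ b = c) ->
  atom x -> atom y -> x <= a -> y <= b -> c <= comp x y.
Proof.
move=> Ea Eb Ec a0 b0 c0 not_abc ax ay xa yb.
have [cx Bcx [xcx cxa]] := atom_below_E_atom ax Ea xa.
have [cy Bcy [ycy cyb]] := atom_below_E_atom ay Eb yb.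
have [xy_ge xy_div] := comp_atoms_ge ax ay Ea Eb a0 b0 Bcx Bcy xcx cxa ycy cyb.
have [ca | ca] := eqVneq c a.
  rewrite ca; apply: le_trans a0 (xy_div _); apply/eqP => ab.
  by apply: not_abc; rewrite ca ab.
apply: le_trans xy_ge; rewrite lexI c0 /=.
apply: le_trans (_ : ~` a <= ~` cx); last by rewrite leC.
rewrite -disj_leC; apply: contraTT ca => ca0.
by rewrite negbK (atom_in_eq subE Ec Ea ca0).
Qed.

Lemma special_extension_diag a x y : atom_in E a -> a <= 0' -> a <= comp a a ->
  atom x -> atom y -> x <= a -> y <= a -> comp x y `&` a != \bot.
Proof.
move=> Ea a0 a_aa ax ay xa ya.
have [cx Bcx [xcx cxa]] := atom_below_E_atom ax Ea xa.
have [cy Bcy [ycy cya]] := atom_below_E_atom ay Ea ya.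
have [xy_ge _] := comp_atoms_ge ax ay Ea Ea a0 a0 Bcx Bcy xcx cxa ycy cya.
have a_ncx : a `&` ~` cx != \bot.
  rewrite disj_leC complK; apply: contraTN a_aa => acx.
  have a_cx : a = cx by apply/le_anti; rewrite acx cxa.
  case: E23B => _ [_ [_ [_ [_ table]]]].
  rewrite -a_cx in Bcx *; rewrite ((table a a Bcx Bcx a0 a0).2 erefl).
  case: Bcx => _ a_neq0 _.
  by apply: contraNN a_neq0 => /le_complx_eq0 ->.
apply: contraNneq a_ncx => xya0; rewrite -lex0 -xya0 lexI leIl andbT.
by apply: le_trans xy_ge; rewrite lexI leIr andbT (le_trans (leIl _ _) a0).
Qed.

End SplittingE23.

Theorem lemma1 (q : nat) (disp : Order.disp_t) (T : ctbDistrLatticeType disp)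
  (comp : T -> T -> T) (conv : T -> T) (ident : T)
  (B E : T -> Prop) :
  (4 <= q)%N ->
  is_RA comp conv ident ->
  ra_atomic T -> ra_symmetric conv -> ra_integral ident ->
  is_E23 comp conv ident q B ->
  split_from comp conv ident B ->
  subalgebra comp conv ident E -> (forall x, E x -> B x) ->
  special_extension comp ident E.
Proof.
move=> _ _ _ _ _ E23B splitB subE EB a b c Ea Eb Ec a0 b0 c0; split.
  move=> not_abc _ x y ax ay xa yb.
  exact: (special_extension_offdiag E23B splitB subE EB Ea Eb Ec a0 b0 c0
    not_abc ax ay xa yb).
move=> a_aa x y ax ay xa ya.
exact: (special_extension_diag E23B splitB subE EB Ea a0 a_aa ax ay xa ya).
Qed.
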